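(* Let $\mathcal B$ be a bimachine realizing a transduction $f$. Then $\mathit{Left}_f(\mathit{Right}_f(\mathcal B))$ and $\mathit{Right}_f(\mathit{Left}_f(\mathcal B))$ are minimal bimachines realizing $f$, and moreover $\mathcal B\sqsubseteq\mathit{Left}_f(\mathit{Right}_f(\mathcal B))$ and $\mathcal B\sqsubseteq\mathit{Right}_f(\mathit{Left}_f(\mathcal B))$.
   Context: Notation: $u^{-1}v$ is the word $v'$ with $uv'=v$; $\bigwedge L$ is the longest common prefix of $L$ ($\bigwedge\emptyset=\varepsilon$). Transductions are partial functions $f:\Sigma^*\to\Sigma^*$. A left automaton is a complete deterministic automaton $\mathcal L$ with initial $l_0$; $[u]_{\mathcal L}$ is the state reached on $u$; $u\sim_{\mathcal L}v$ iff $[u]_{\mathcal L}=[v]_{\mathcal L}$. A right automaton $\mathcal R$ with initial state $r_0$ is backward deterministic and backward complete and reads words from right to left: $[u]_{\mathcal R}$ is the unique $p$ with a run on $u$ from $p$ to $r_0$, $u$ accepted iff $[u]_{\mathcal R}$ final, $u\sim_{\mathcal R}v$ iff $[u]_{\mathcal R}=[v]_{\mathcal R}$. For automata of the same kind, $\mathcal A_1\sqsubseteq\mathcal A_2$ means ${\sim_{\mathcal A_1}}\subseteq{\sim_{\mathcal A_2}}$. A bimachine $\mathcal B=(\mathcal L,\mathcal R,\omega,\lambda,\rho)$: left automaton $\mathcal L$ and right automaton $\mathcal R$ accepting the same language, $\omega:Q_{\mathcal L}\times\Sigma\times Q_{\mathcal R}\to\Sigma^*$, $\lambda$ on final states of $\mathcal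 R$, $\rho$ on final states of $\mathcal L$; it realizes $u=\sigma_1\cdots\sigma_n\mapsto \lambda([u]_{\mathcal R})\prod_{k=1}^n\omega([\sigma_1\cdots\sigma_{k-1}]_{\mathcal L},\sigma_k,[\sigma_{k+1}\cdots\sigma_n]_{\mathcal R})\,\rho([u]_{\mathcal L})$ on the accepted language. $\mathcal B_1\sqsubseteq\mathcal B_2$ iff $\mathcal L_1\sqsubseteq\mathcal L_2$ and $\mathcal R_1\sqsubseteq\mathcal R_2$. A bimachine $\mathcal B$ realizing $f$ is minimal if there is no bimachine $\mathcal B'$ realizing $f$ with $\mathcal B\sqsubseteq\mathcal B'$ and $\mathcal B'\not\sqsubseteq\mathcal B$. Left minimization: for $\mathcal B$ with right automaton $\mathcal R$ realizing $f$, let $\widehat f_{[w]_{\mathcal R}}(u)=\bigwedge\{f(uv)\mid v\sim_{\mathcal R}w,\,uv\in\mathrm{dom}(f)\}$ and $u\sim_Lv$ iff for all $w$, $uw\in\mathrm{dom}f\Leftrightarrow vw\in\mathrm{dom}f$ and, if $uw\in\mathrm{dom}f$, $\widehat f_{[w]_{\mathcal R}}(u)^{-1}f(uw)=\widehat f_{[w]_{\mathcal R}}(v)^{-1}f(vw)$. $\mathit{Left}_f(\mathcal R)$ is the deterministic automaton on $\Sigma^*/{\sim_L}$ with transitions $([u],\sigma,[u\sigma])$, initial $[\varepsilon]$, finals $\{[u]\mid u\in\mathrm{dom}f\}$. $\mathit{Left}_f(\mathcal B)$ is the bimachine $(\mathit{Left}_f(\mathcal R),\mathcal R,\omega',\lambda',\rho')$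 with $\omega'([u]_L,\sigma,[w]_{\mathcal R})=\widehat f_{[\sigma w]_{\mathcal R}}(u)^{-1}\widehat f_{[w]_{\mathcal R}}(u\sigma)$, $\lambda'([w]_{\mathcal R})=\widehat f_{[w]_{\mathcal R}}(\varepsilon)$, $\rho'([u]_L)=\widehat f_{[\varepsilon]_{\mathcal R}}(u)^{-1}f(u)$; it realizes $f$. $\mathit{Right}_f(\mathcal B)$ (with left automaton that of $\mathcal B$ and right automaton $\mathit{Right}_f(\mathcal L)$) is defined symmetrically, by applying the mirror of this construction (to $w\mapsto\overline{f(\overline w)}$, $\overline{x}$ the mirror image of $x$, and the mirrored bimachine, then mirroring back). *)

From Stdlib Require Import ClassicalEpsilon.
From mathcomp Require Import all_boot.
Set Implicit Arguments. Unset Strict Implicit. Unset Printing Implicit Defensive.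

Section Bimachines.
Variable S : finType.

Definition word := seq S.
Definition transduction := word -> option word.

(* u^{-1} v : the word v' with u v' = v (used only when u is a prefix of v) *)
Definition lquot (u v : word) : word := drop (size u) v.

(* longest common prefix of a (possibly infinite) set of words; /\ empty = eps *)
Definition is_lcp (P : word -> Prop) (x : word) : Prop :=
  (forall y, P y -> prefix x y) /\
  (forall z, (forall y, P y -> prefix z y) -> prefix z x).

Definition lcp (P : word -> Prop) : word :=
  if excluded_middle_informative (exists y, P y)
  then epsilon (inhabits ([::] : word)) (is_lcp P)
  else [::].

Record lauto (Q : finType) := LAuto {
  l_init : Q; l_delta : Q -> S -> Q; l_final : pred Q }.

Definition lstate (Q : finType) (A : lauto Q) (u : word) : Q :=
  foldl (l_delta A) (l_init A) u.
Definition lequiv (Q : finType) (A : lauto Q) (u v : word) : Prop :=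
  lstate A u = lstate A v.

(* Right automaton: backward deterministic and backward complete, so its
   transitions are given by a predecessor function: r_delta s q is the unique
   p with a transition (p, s, q).  [u]_R is the unique p with a run on u from
   p to r0. *)
Record rauto (Q : finType) := RAuto {
  r_init : Q; r_delta : S -> Q -> Q; r_final : pred Q }.

Definition rstate (Q : finType) (A : rauto Q) (u : word) : Q :=
  foldr (r_delta A) (r_init A) u.
Definition requiv (Q : finType) (A : rauto Q) (u v : word) : Prop :=
  rstate A u = rstate A v.

Record bimachine (QL QR : finType) := Bimachine {
  bL : lauto QL;
  bR : rauto QR;
  b_omega : QL -> S -> QR -> word;
  b_lambda : QR -> word;   (* only relevant on final states of R *)
  b_rho : QL -> word }.    (* only relevant on final states of L *)

Section BM.
Variables (QL QR : finType) (B : bimachine QL QR).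

Definition bm_wf : Prop :=
  forall u, l_final (bL B) (lstate (bL B) u) = r_final (bR B) (rstate (bR B) u).

(* prod_{k} omega([prefix]_L, sigma_k, [suffix]_R), p = letters already read *)
Fixpoint bm_mid (p u : word) : word :=
  match u with
  | [::] => [::]
  | s :: w => b_omega B (lstate (bL B) p) s (rstate (bR B) w) ++ bm_mid (rcons p s) w
  end.

Definition bm_out (u : word) : word :=
  b_lambda B (rstate (bR B) u) ++ bm_mid [::] u ++ b_rho B (lstate (bL B) u).

Definition realizes (f : transduction) : Prop :=
  bm_wf /\
  forall u, f u = if l_final (bL B) (lstate (bL B) u) then Some (bm_out u) else None.
End BM.

Definition bm_le (QL1 QR1 QL2 QR2 : finType)
  (B1 : bimachine QL1 QR1) (B2 : bimachine QL2 QR2) : Prop :=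
  (forall u v, lequiv (bL B1) u v -> lequiv (bL B2) u v) /\
  (forall u v, requiv (bR B1) u v -> requiv (bR B2) u v).

Definition minimal (f : transduction) (QL QR : finType) (B : bimachine QL QR) : Prop :=
  ~ exists (QL' QR' : finType) (B' : bimachine QL' QR'),
      realizes B' f /\ bm_le B B' /\ ~ bm_le B' B.

Definition fhat (f : transduction) (QR : finType) (R : rauto QR) (w u : word) : word :=
  lcp (fun y => exists v, rstate R v = rstate R w /\ f (u ++ v) = Some y).

Definition leftEq (f : transduction) (QR : finType) (R : rauto QR) (u v : word) : Prop :=
  forall w,
    (f (u ++ w) <> None <-> f (v ++ w) <> None) /\
    (forall y1 y2, f (u ++ w) = Some y1 -> f (v ++ w) = Some y2 ->
        lquot (fhat f R w u) y1 = lquot (fhat f R w v) y2).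

(* B' is (a copy of) Left_f(B): its left automaton is Left_f(R) up to
   isomorphism of the reachable part (same word equivalence ~_L, same final
   classes), its right automaton is R, and omega', lambda', rho' are given by
   the formulas of the paper. *)
Definition IsLeftOf (f : transduction) (QL QR QL' : finType)
  (B : bimachine QL QR) (B' : bimachine QL' QR) : Prop :=
  let R := bR B in let L' := bL B' in
  [/\ bR B' = R,
      forall u v, lequiv L' u v <-> leftEq f R u v,
      forall u, l_final L' (lstate L' u) = (f u != None) &
  [/\       forall u s w, b_omega B' (lstate L' u) s (rstate R w)
                    = lquot (fhat f R (s :: w) u) (fhat f R w (rcons u s)),
      forall w, r_final R (rstate R w) -> b_lambda B' (rstate R w) = fhat f R w [::]
    & forall u y, f u = Some y -> b_rho B' (lstate L' u) = lquot (fhat f R [::] u) y]].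

Definition mirrorT (f : transduction) : transduction :=
  fun w => omap (@rev S) (f (rev w)).
Definition mirrorL (Q : finType) (A : lauto Q) : rauto Q :=
  RAuto (l_init A) (fun s q => l_delta A q s) (l_final A).
Definition mirrorR (Q : finType) (A : rauto Q) : lauto Q :=
  LAuto (r_init A) (fun q s => r_delta A s q) (r_final A).
Definition mirrorB (QL QR : finType) (B : bimachine QL QR) : bimachine QR QL :=
  Bimachine (mirrorR (bR B)) (mirrorL (bL B))
    (fun p s q => rev (b_omega B q s p))
    (fun q => rev (b_rho B q)) (fun p => rev (b_lambda B p)).

(* B' is (a copy of) Right_f(B): mirror of Left applied to mirrors *)
Definition IsRightOf (f : transduction) (QL QR QR' : finType)
  (B : bimachine QL QR) (B' : bimachine QL QR') : Prop :=
  IsLeftOf (mirrorT f) (mirrorB B) (mirrorB B').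

End Bimachines.

(* The residual equivalence [~_L] of [f] with respect to a right automaton [R]
   is the coarsest left equivalence that can be paired with [R]: every
   bimachine realizing [f] whose right automaton is coarser than [R] has a
   finer left automaton, because both halves of its output on [u w] depend only
   on [[u]_L, w] and on [u, [w]_R], and coarsening [R] only refines [~_L].
   Mirroring gives the dual fact for [Right_f].  In [Left_f(Right_f(B))] the
   left automaton is thus maximal for its right automaton, which is itself
   maximal for the left automaton of [B], coarser still; so no bimachine
   realizing [f] strictly coarsens it, and both automata are coarser than
   those of [B].  The same argument applies to [Right_f(Left_f(B))]. *)

From Stdlib Require Import ClassicalEpsilon FunctionalExtensionality.
From mathcomp Require Import all_boot.
Set Implicit Arguments. Unset Strict Implicit. Unset Printing Implicit Defensive.

Definition asbool (P : Prop) : bool :=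
  if excluded_middle_informative P then true else false.

Lemma asboolP (P : Prop) : reflect P (asbool P).
Proof. by rewrite /asbool; case: excluded_middle_informative => h; constructor. Qed.

Section LongestCommonPrefix.
Variable S : finType.
Implicit Types (P : word S -> Prop) (D : word S -> Prop)
  (F G : word S -> option (word S)) (a x y z w : word S).

Lemma prefix_anti x y : prefix x y -> prefix y x -> x = y.
Proof.
move=> xy yx; have exy : size x = size y.
  by apply/eqP; rewrite eqn_leq (size_prefix xy) (size_prefix yx).
by move: xy; rewrite prefixE exy take_size => /eqP.
Qed.

Lemma lquot_cat a y : lquot a (a ++ y) = y.
Proof. by rewrite /lquot drop_size_cat. Qed.

Lemma cat_lquot a y : prefix a y -> a ++ lquot a y = y.
Proof. by move=> /prefixP[t ->]; rewrite lquot_cat. Qed.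

Lemma lquot_catl a b y : lquot (a ++ b) y = lquot b (lquot a y).
Proof. by rewrite /lquot drop_drop size_cat addnC. Qed.

Lemma lquot_nil a : lquot a ([::] : word S) = [::].
Proof. by rewrite /lquot drop_oversize. Qed.

Lemma is_lcp_exists P y0 : P y0 -> exists x, is_lcp P x.
Proof.
move=> Py0.
pose common k := (k <= size y0) && asbool (forall y, P y -> prefix (take k y0) y).
have common0 : exists k, common k.
  by exists 0; apply/andP; split=> //; apply/asboolP => y _; rewrite take0 prefix0s.
have common_le k : common k -> k <= size y0 by case/andP.
case: (ex_maxnP common0 common_le) => k /andP[_ /asboolP Hk] max_k.
exists (take k y0); split=> // z Hz.
have ez : take (size z) y0 = z by apply/eqP; rewrite -prefixE; apply: Hz.
have : size z <= k.
  apply: max_k; rewrite /common -{1}ez size_take_min geq_minr; apply/asboolP.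
  by move=> y Py; rewrite ez; apply: Hz.
by move=> le_zk; rewrite -{1}ez -(take_takel y0 le_zk) prefix_take.
Qed.

Lemma is_lcp_uniq P x y : is_lcp P x -> is_lcp P y -> x = y.
Proof. by move=> [Px Hx] [Py Hy]; apply: prefix_anti; [apply: Hy | apply: Hx]. Qed.

Lemma lcp_spec P y : P y -> is_lcp P (lcp P).
Proof.
move=> Py; rewrite /lcp; case: excluded_middle_informative => [ne|[]]; last by exists y.
by apply: epsilon_spec; case: ne => y' /is_lcp_exists.
Qed.

Lemma lcp_none P : ~ (exists y, P y) -> lcp P = [::].
Proof. by rewrite /lcp; case: excluded_middle_informative. Qed.

Lemma lcp_prefix P y : P y -> prefix (lcp P) y.
Proof. by move=> Py; apply: (lcp_spec Py).1. Qed.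

Lemma lcp_mono P1 P2 y : P1 y -> (forall y, P1 y -> P2 y) -> prefix (lcp P2) (lcp P1).
Proof.
by move=> P1y sub; apply: (lcp_spec P1y).2 => z /sub; apply: lcp_prefix.
Qed.

Lemma lcp_ext P1 P2 : (forall y, P1 y <-> P2 y) -> lcp P1 = lcp P2.
Proof.
move=> eqP12; case: (classic (exists y, P1 y)) => [[y P1y]|nP1]; last first.
  by rewrite !lcp_none // => -[y /eqP12 P1y]; apply: nP1; exists y.
apply: is_lcp_uniq (lcp_spec P1y) _.
have [H1 H2] := lcp_spec (proj1 (eqP12 y) P1y).
by split=> [y' /eqP12|z Hz]; [apply: H1 | apply: H2 => y' /eqP12; apply: Hz].
Qed.

Definition img F D : word S -> Prop := fun y => exists x, D x /\ F x = Some y.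

Lemma lcp_img_eq F G D :
  (forall x, D x -> F x = G x) -> lcp (img F D) = lcp (img G D).
Proof.
by move=> FG; apply: lcp_ext => y; split=> -[x [Dx E]]; exists x; rewrite ?FG// -?FG.
Qed.

Lemma lquot_lcp F D a : (forall x y, D x -> F x = Some y -> prefix a y) ->
  lquot a (lcp (img F D)) = lcp (img (fun x => omap (lquot a) (F x)) D).
Proof.
move=> Ha; set G := fun x => _.
case: (classic (exists y, img F D y)) => [[y0 [x0 [Dx0 Fx0]]]|nF]; last first.
  rewrite !lcp_none ?lquot_nil // => -[y [x [Dx]]]; rewrite /G.
  by case E: (F x) => [y'|] //= _; apply: nF; exists y', x.
have imgF : img F D y0 by exists x0.
have [HF1 HF2] := lcp_spec imgF.
have imgG : img G D (lquot a y0) by exists x0; rewrite /G Fx0.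
have al : prefix a (lcp (img F D)) by apply: HF2 => y [x [Dx /Ha]]; apply.
apply: is_lcp_uniq (lcp_spec imgG); split.
  move=> yG [x [Dx]]; rewrite /G; case E: (F x) => [y|] //= [<-].
  have : prefix (lcp (img F D)) y by apply: HF1; exists x.
  by rewrite -{1}(cat_lquot al) -{1}(cat_lquot (Ha _ _ Dx E)) prefix_catr // eqxx.
move=> z Hz; have : prefix (a ++ z) (lcp (img F D)).
  apply: HF2 => y [x [Dx E]]; rewrite -(cat_lquot (Ha _ _ Dx E)) prefix_catr // eqxx.
  by apply: Hz; exists x; rewrite /G E.
by rewrite -{1}(cat_lquot al) prefix_catr // eqxx.
Qed.

Lemma lquot_lcp_shift F D a w : D w ->
  (forall x y, D x -> F x = Some y -> prefix a y) ->
  omap (lquot (lcp (img F D))) (F w) =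
  omap (lquot (lcp (img (fun x => omap (lquot a) (F x)) D))) (omap (lquot a) (F w)).
Proof.
move=> Dw Ha; case E: (F w) => [y|] //=; congr Some.
have al : prefix a (lcp (img F D)).
  by apply: (lcp_spec (y := y) _).2 => [|y' [x [Dx /Ha]]]; [exists w | apply].
by rewrite -(lquot_lcp Ha) -lquot_catl cat_lquot.
Qed.

Lemma lquot_lcp_eq F1 F2 D a1 a2 w : D w ->
  (forall x y, D x -> F1 x = Some y -> prefix a1 y) ->
  (forall x y, D x -> F2 x = Some y -> prefix a2 y) ->
  (forall x, D x -> omap (lquot a1) (F1 x) = omap (lquot a2) (F2 x)) ->
  omap (lquot (lcp (img F1 D))) (F1 w) = omap (lquot (lcp (img F2 D))) (F2 w).
Proof.
move=> Dw H1 H2 H12.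
by rewrite (lquot_lcp_shift Dw H1) (lquot_lcp_shift Dw H2) (lcp_img_eq H12) H12.
Qed.

End LongestCommonPrefix.

Section LeftEquivalence.
Variables (S : finType) (f : transduction S).
Implicit Types (u v w x y : word S).

Definition lauto_le (Q1 Q2 : finType) (A1 : lauto S Q1) (A2 : lauto S Q2) :=
  forall u v, lequiv A1 u v -> lequiv A2 u v.
Definition rauto_le (Q1 Q2 : finType) (A1 : rauto S Q1) (A2 : rauto S Q2) :=
  forall u v, requiv A1 u v -> requiv A2 u v.

Definition fresid (Q : finType) (R : rauto S Q) u w : option (word S) :=
  omap (lquot (fhat f R w u)) (f (u ++ w)).

Lemma leftEqP (Q : finType) (R : rauto S Q) u v :
  leftEq f R u v <-> fresid R u =1 fresid R v.
Proof.
rewrite /fresid; split=> [H w | H w]; have := H w.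
  case: (f (u ++ w)) => [y1|]; case: (f (v ++ w)) => [y2|] [Hdom Hq] //=.
  - by rewrite (Hq _ _ erefl erefl).
  - by case: (proj1 Hdom).
  - by case: (proj2 Hdom).
case: (f (u ++ w)) => [y1|]; case: (f (v ++ w)) => [y2|] //= E.
by split=> // _ _ [<-] [<-]; case: E.
Qed.

Lemma leftEq_sym (Q : finType) (R : rauto S Q) u v : leftEq f R u v -> leftEq f R v u.
Proof. by rewrite !leftEqP => H w. Qed.

Lemma leftEq_trans (Q : finType) (R : rauto S Q) u v x :
  leftEq f R u v -> leftEq f R v x -> leftEq f R u x.
Proof. by rewrite !leftEqP => H1 H2 w; rewrite H1 H2. Qed.

Lemma fhat_requiv (Q : finType) (R : rauto S Q) w w' u :
  requiv R w w' -> fhat f R w u = fhat f R w' u.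
Proof. by rewrite /fhat => ->. Qed.

Lemma fhat_prefix (Q : finType) (R : rauto S Q) w u x y :
  requiv R x w -> f (u ++ x) = Some y -> prefix (fhat f R w u) y.
Proof. by move=> Dx E; apply: lcp_prefix; exists x. Qed.

Lemma requiv_cons (Q : finType) (R : rauto S Q) s x w :
  requiv R x w -> requiv R (s :: x) (s :: w).
Proof. by rewrite /requiv /rstate /= => ->. Qed.

Lemma leftEq_antitone (Q Q' : finType) (R : rauto S Q) (R' : rauto S Q') u v :
  rauto_le R R' -> leftEq f R' u v -> leftEq f R u v.
Proof.
rewrite !leftEqP => RR' H w.
apply: (lquot_lcp_eq (a1 := fhat f R' w u) (a2 := fhat f R' w v)) => // [||x Dx].
- by move=> x y /RR' /fhat_prefix; apply.
- by move=> x y /RR' /fhat_prefix; apply.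
by rewrite -!(fhat_requiv _ (RR' _ _ Dx)); apply: H.
Qed.

Lemma leftEq_rcons (Q : finType) (R : rauto S Q) u v s :
  leftEq f R u v -> leftEq f R (rcons u s) (rcons v s).
Proof.
rewrite !leftEqP /fresid => H w.
apply: (lquot_lcp_eq (a1 := fhat f R (s :: w) u) (a2 := fhat f R (s :: w) v))
  => // [||x Dx]; rewrite ?cat_rcons.
- by move=> x y /(requiv_cons s) /fhat_prefix; rewrite cat_rcons; apply.
- by move=> x y /(requiv_cons s) /fhat_prefix; rewrite cat_rcons; apply.
by rewrite -!(fhat_requiv _ (requiv_cons s Dx)); apply: H.
Qed.

Lemma lquot_fhat_rcons (Q : finType) (R : rauto S Q) u s w :
  lquot (fhat f R (s :: w) u) (fhat f R w (rcons u s)) =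
  lcp (img (fun x => fresid R u (s :: x)) (fun x => requiv R x w)).
Proof.
rewrite [fhat f R w _]/fhat lquot_lcp => [|x y /(requiv_cons s) /fhat_prefix].
  by apply: lcp_img_eq => x Dx; rewrite /fresid cat_rcons (fhat_requiv _ (requiv_cons s Dx)).
by rewrite cat_rcons; apply.
Qed.

End LeftEquivalence.

Section BimachineOutput.
Variables (S : finType) (QL QR : finType) (B : bimachine S QL QR).
Local Notation L := (bL B).
Local Notation R := (bR B).
Implicit Types (u w : word S).

Fixpoint bm_word (ql : QL) u (qr : QR) : word S :=
  if u is s :: u' then
    b_omega B ql s (foldr (r_delta R) qr u') ++ bm_word (l_delta L ql s) u' qr
  else [::].

Lemma bm_midE p u : bm_mid B p u = bm_word (lstate L p) u (r_init R).
Proof. by elim: u p => [|s u IH] p //=; rewrite IH /lstate foldl_rcons. Qed.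

Lemma bm_word_cat ql u w qr : bm_word ql (u ++ w) qr =
  bm_word ql u (foldr (r_delta R) qr w) ++ bm_word (foldl (l_delta L) ql u) w qr.
Proof. by elim: u ql => [|s u IH] ql //=; rewrite IH foldr_cat catA. Qed.

Lemma bm_word_rcons ql u s qr : bm_word ql (rcons u s) qr =
  bm_word ql u (r_delta R s qr) ++ b_omega B (foldl (l_delta L) ql u) s qr.
Proof.
elim: u ql => [|s' u IH] ql /=; first by rewrite cats0.
by rewrite IH foldr_rcons catA.
Qed.

Definition out_prefix u (qr : QR) : word S :=
  b_lambda B (foldr (r_delta R) qr u) ++ bm_word (l_init L) u qr.
Definition out_suffix (ql : QL) w : word S :=
  bm_word ql w (r_init R) ++ b_rho B (foldl (l_delta L) ql w).

Variable f : transduction S.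
Hypothesis realizes_f : realizes B f.

Lemma realizes_cat u w : f (u ++ w) =
  if l_final L (foldl (l_delta L) (lstate L u) w)
  then Some (out_prefix u (rstate R w) ++ out_suffix (lstate L u) w) else None.
Proof.
case: realizes_f => _ ->; rewrite /bm_out /lstate foldl_cat.
case: ifP => // _; congr Some.
by rewrite /out_prefix /out_suffix bm_midE bm_word_cat /rstate foldr_cat /lstate !catA.
Qed.

Lemma realizes_rfinal u : r_final R (rstate R u) = (f u != None).
Proof. by case: realizes_f => wf ->; rewrite -wf; case: ifP. Qed.

Lemma lequiv_leftEq u v : lequiv L u v -> leftEq f R u v.
Proof.
rewrite leftEqP /fresid => Luv w.
apply: (lquot_lcp_eq (a1 := out_prefix u (rstate R w))
                     (a2 := out_prefix v (rstate R w))) => // [||x Dx].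
- by move=> x y Dx; rewrite realizes_cat Dx; case: ifP => // _ [<-]; apply: prefix_prefix.
- by move=> x y Dx; rewrite realizes_cat Dx; case: ifP => // _ [<-]; apply: prefix_prefix.
by rewrite !realizes_cat Dx Luv; case: ifP => //= _; rewrite !lquot_cat.
Qed.

End BimachineOutput.

Section LeftConstruction.
Variables (S : finType) (QL QR : finType) (f : transduction S) (B : bimachine S QL QR).
Hypothesis realizes_f : realizes B f.
Local Notation R := (bR B).
Local Notation LE := (leftEq f R).

(* Since [~_L] is coarser than [~_(bL B)], a [~_L]-class is determined by the
   set of states of [bL B] it reaches; this gives a finite carrier. *)
Definition left_class (u : word S) : {set QL} :=
  [set q | asbool (exists2 v, lstate (bL B) v = q & LE u v)].

Lemma left_class_eq u v : left_class u = left_class v <-> LE u v.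
Proof.
split=> [E | Euv].
  have : lstate (bL B) u \in left_class v.
    by rewrite -E inE; apply/asboolP; exists u => //; rewrite leftEqP.
  rewrite inE => /asboolP [x ex Evx].
  exact: leftEq_trans (lequiv_leftEq realizes_f (esym ex)) (leftEq_sym Evx).
apply/setP => q; rewrite !inE; apply/asboolP/asboolP => -[x ex Ex]; exists x => //.
  exact: leftEq_trans (leftEq_sym Euv) Ex.
exact: leftEq_trans Euv Ex.
Qed.

Definition left_rep (X : {set QL}) : word S :=
  epsilon (inhabits [::]) (fun u => left_class u = X).

Lemma left_repP u : LE u (left_rep (left_class u)).
Proof.
apply/left_class_eq/esym.
by apply: (epsilon_spec (inhabits [::]) (fun v => left_class v = left_class u)); exists u.
Qed.

Definition right_rep (q : QR) : word S :=
  epsilon (inhabits [::]) (fun w => rstate R w = q).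

Lemma right_repP w : requiv R (right_rep (rstate R w)) w.
Proof. by apply: (epsilon_spec (inhabits [::]) (fun v => rstate R v = rstate R w)); exists w. Qed.

Definition left_auto : lauto S {set QL} :=
  LAuto (left_class [::]) (fun X s => left_class (rcons (left_rep X) s))
        (fun X => f (left_rep X) != None).

Lemma lstate_left_auto u : lstate left_auto u = left_class u.
Proof.
elim/last_ind: u => [|u s IH] //; rewrite /lstate foldl_rcons -/(lstate _ u) IH /=.
by apply/left_class_eq/leftEq_rcons/leftEq_sym/left_repP.
Qed.

Lemma left_omega_wd u v s w : LE u v ->
  lquot (fhat f R (s :: w) u) (fhat f R w (rcons u s)) =
  lquot (fhat f R (s :: w) v) (fhat f R w (rcons v s)).
Proof.
by rewrite leftEqP !lquot_fhat_rcons => Euv; apply: lcp_img_eq => x _; apply: Euv.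
Qed.

Definition left_bimachine : bimachine S {set QL} QR :=
  Bimachine left_auto R
    (fun X s q => lquot (fhat f R (s :: right_rep q) (left_rep X))
                        (fhat f R (right_rep q) (rcons (left_rep X) s)))
    (fun q => fhat f R (right_rep q) [::])
    (fun X => odflt [::] (fresid f R (left_rep X) [::])).

Lemma left_bimachineP : IsLeftOf f B left_bimachine.
Proof.
have fresid_rep u : fresid f R u [::] = fresid f R (left_rep (left_class u)) [::].
  by have /leftEqP := left_repP u; apply.
split=> //=.
- by move=> u v; rewrite /lequiv !lstate_left_auto; apply: left_class_eq.
- move=> u; rewrite lstate_left_auto; move: (fresid_rep u); rewrite /fresid !cats0.
  by case: (f u); case: (f _).
split=> /= [u s w | w _ | u y E]; rewrite ?lstate_left_auto.
- rewrite (fhat_requiv _ _ (requiv_cons s (right_repP w))) (fhat_requiv _ _ (right_repP w)).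
  by apply/left_omega_wd/leftEq_sym/left_repP.
- exact: fhat_requiv _ _ (right_repP w).
by rewrite -fresid_rep /fresid cats0 E.
Qed.

End LeftConstruction.

Section LeftRealizes.
Variables (S : finType) (QL QR QL' : finType) (f : transduction S)
  (B : bimachine S QL QR) (B' : bimachine S QL' QR).
Hypotheses (isLeft : IsLeftOf f B B') (realizes_f : realizes B f).
Local Notation R := (bR B).

(* The product telescopes: [omega'([p], s, [w])] extends [fhat (s :: w) p] to
   [fhat w (rcons p s)]. *)
Lemma left_mid_telescope p w y : f (p ++ w) = Some y ->
  fhat f R w p ++ bm_mid B' p w ++ lquot (fhat f R [::] (p ++ w)) y = y.
Proof.
case: isLeft => eR _ _ [omegaE _ _].
elim: w p => [|s w IH] p E.
  rewrite cats0 in E *; apply: cat_lquot.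
  by apply: (fhat_prefix (x := [::])); rewrite ?cats0.
have E' : f (rcons p s ++ w) = Some y by rewrite cat_rcons.
have := IH _ E'; rewrite cat_rcons => {2}<-.
rewrite /= eR omegaE -catA catA cat_lquot //.
apply: (lcp_mono (y := y)) => [|y' [x [Dx Ex]]]; first by exists w.
by exists (s :: x); split; [apply: requiv_cons | rewrite -cat_rcons].
Qed.

Lemma left_realizes : realizes B' f.
Proof.
case: isLeft => eR _ finalE [_ lambdaE rhoE]; split=> u.
  by rewrite eR finalE (realizes_rfinal realizes_f).
rewrite finalE; case E: (f u) => [y|] //=; congr Some.
rewrite /bm_out eR lambdaE ?(realizes_rfinal realizes_f) ?E // (rhoE _ _ E).
by rewrite -{1}(left_mid_telescope (p := [::]) E).
Qed.

End LeftRealizes.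

Section Mirror.
Variable S : finType.
Implicit Types (f : transduction S) (u v : word S).

Lemma lstate_mirrorR (Q : finType) (A : rauto S Q) u :
  lstate (mirrorR A) u = rstate A (rev u).
Proof. by rewrite /lstate /rstate -{1}(revK u) foldl_rev. Qed.

Lemma rstate_mirrorL (Q : finType) (A : lauto S Q) u :
  rstate (mirrorL A) u = lstate A (rev u).
Proof. by rewrite /lstate /rstate foldl_rev. Qed.

Lemma lauto_le_mirrorR (Q1 Q2 : finType) (A1 : rauto S Q1) (A2 : rauto S Q2) :
  lauto_le (mirrorR A1) (mirrorR A2) <-> rauto_le A1 A2.
Proof.
rewrite /lauto_le /rauto_le /lequiv /requiv.
split=> H u v; last by rewrite !lstate_mirrorR; apply: H.
by rewrite -(revK u) -(revK v) -!lstate_mirrorR; apply: H.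
Qed.

Lemma rauto_le_mirrorL (Q1 Q2 : finType) (A1 : lauto S Q1) (A2 : lauto S Q2) :
  rauto_le (mirrorL A1) (mirrorL A2) <-> lauto_le A1 A2.
Proof.
rewrite /lauto_le /rauto_le /lequiv /requiv.
split=> H u v; last by rewrite !rstate_mirrorL; apply: H.
by rewrite -(revK u) -(revK v) -!rstate_mirrorL; apply: H.
Qed.

Lemma mirrorTK : involutive (@mirrorT S).
Proof.
move=> f; apply: functional_extensionality => w; rewrite /mirrorT revK.
by case: (f w) => //= y; rewrite revK.
Qed.

Lemma mirrorBK (QL QR : finType) (B : bimachine S QL QR) : mirrorB (mirrorB B) = B.
Proof.
case: B => [[l0 ld lf] [r0 rd rf] om la rh]; rewrite /mirrorB /=.
by congr Bimachine; do !apply: functional_extensionality => ?; rewrite revK.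
Qed.

Lemma bm_word_mirror (QL QR : finType) (B : bimachine S QL QR) qr u ql :
  bm_word (mirrorB B) qr u ql = rev (bm_word B ql (rev u) qr).
Proof.
elim: u qr => [|s u IH] qr //=.
by rewrite IH rev_cons bm_word_rcons rev_cat foldl_rev.
Qed.

Lemma mirror_realizes (QL QR : finType) (B : bimachine S QL QR) f :
  realizes B f -> realizes (mirrorB B) (mirrorT f).
Proof.
move=> [wf realE]; split=> u; first by rewrite /= lstate_mirrorR rstate_mirrorL wf.
rewrite /mirrorT realE /= lstate_mirrorR -wf; case: ifP => //= _; congr Some.
rewrite /bm_out !bm_midE /= lstate_mirrorR rstate_mirrorL bm_word_mirror.
by rewrite lstate_mirrorR !rev_cat -!catA.
Qed.

Lemma mirror_realizesE (QL QR : finType) (B : bimachine S QL QR) f :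
  realizes (mirrorB B) (mirrorT f) <-> realizes B f.
Proof.
split=> [|]; last exact: mirror_realizes.
by move/mirror_realizes; rewrite mirrorBK mirrorTK.
Qed.

End Mirror.

Section LeftRightMaximality.
Variable S : finType.
Implicit Type f : transduction S.

Lemma left_exists f (QL QR : finType) (B : bimachine S QL QR) :
  realizes B f -> exists (QL' : finType) (B' : bimachine S QL' QR), IsLeftOf f B B'.
Proof. by move=> rB; exists _, (left_bimachine f B); apply: left_bimachineP. Qed.

Lemma right_exists f (QL QR : finType) (B : bimachine S QL QR) :
  realizes B f -> exists (QR' : finType) (B' : bimachine S QL QR'), IsRightOf f B B'.
Proof.
move=> /mirror_realizes /left_exists [QR' [B' isLeft]].
by exists QR', (mirrorB B'); rewrite /IsRightOf mirrorBK.
Qed.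

Lemma right_realizes f (QL QR QR' : finType) (B : bimachine S QL QR)
  (B' : bimachine S QL QR') :
  IsRightOf f B B' -> realizes B f -> realizes B' f.
Proof. by move=> isRight /mirror_realizes/(left_realizes isRight)/mirror_realizesE. Qed.

Lemma right_lequiv f (QL QR QR' : finType) (B : bimachine S QL QR)
  (B' : bimachine S QL QR') :
  IsRightOf f B B' -> forall u v, lequiv (bL B') u v <-> lequiv (bL B) u v.
Proof.
case=> /= eR _ _ _ u v; rewrite /lequiv -(revK u) -(revK v) -!rstate_mirrorL.
by rewrite eR.
Qed.

Lemma left_lauto_max f (QL QR QL2 QL' QR' : finType) (B : bimachine S QL QR)
  (B2 : bimachine S QL2 QR) (B' : bimachine S QL' QR') :
  IsLeftOf f B B2 -> realizes B' f -> rauto_le (bR B2) (bR B') ->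
  lauto_le (bL B') (bL B2).
Proof.
case=> eR lequivE _ _ rB' le_R u v /(lequiv_leftEq rB') Euv.
by apply/lequivE/(leftEq_antitone _ Euv); rewrite -eR.
Qed.

Lemma right_rauto_max f (QL QR QR1 QL' QR' : finType) (B : bimachine S QL QR)
  (B1 : bimachine S QL QR1) (B' : bimachine S QL' QR') :
  IsRightOf f B B1 -> realizes B' f -> lauto_le (bL B1) (bL B') ->
  rauto_le (bR B') (bR B1).
Proof.
move=> isRight /mirror_realizes rB' /rauto_le_mirrorL le_L.
exact/lauto_le_mirrorR/(left_lauto_max isRight rB' le_L).
Qed.

Lemma minimal_of_max f (QL QR : finType) (B : bimachine S QL QR) :
  (forall (QL' QR' : finType) (B' : bimachine S QL' QR'), realizes B' f ->
     rauto_le (bR B) (bR B') -> lauto_le (bL B') (bL B)) ->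
  (forall (QL' QR' : finType) (B' : bimachine S QL' QR'), realizes B' f ->
     lauto_le (bL B) (bL B') -> rauto_le (bR B') (bR B)) ->
  minimal f B.
Proof.
move=> maxL maxR [QL' [QR' [B' [rB' [[le_L le_R] not_le]]]]].
by apply: not_le; split; [apply: maxL | apply: maxR].
Qed.

Lemma left_of_right_minimal f (QL QR QR1 QL2 : finType) (B : bimachine S QL QR)
  (B1 : bimachine S QL QR1) (B2 : bimachine S QL2 QR1) :
  realizes B f -> IsRightOf f B B1 -> IsLeftOf f B1 B2 ->
  [/\ realizes B2 f, minimal f B2 & bm_le B B2].
Proof.
move=> rB isRight isLeft; have rB1 := right_realizes isRight rB.
have eR : bR B2 = bR B1 by case: isLeft.
have le_L12 : lauto_le (bL B1) (bL B2).
  by apply: (left_lauto_max isLeft rB1); rewrite eR.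
have le_L : lauto_le (bL B) (bL B2) by move=> u v /(right_lequiv isRight) /le_L12.
have le_R : rauto_le (bR B) (bR B2).
  by rewrite eR; apply: (right_rauto_max isRight rB) => u v /(right_lequiv isRight).
split; [exact: left_realizes isLeft rB1 | apply: minimal_of_max | by []].
  by move=> QL' QR' B' rB'; apply: left_lauto_max isLeft rB'.
move=> QL' QR' B' rB' le_L2; rewrite eR; apply: (right_rauto_max isRight rB').
by move=> u v /(right_lequiv isRight) /le_L /le_L2.
Qed.

Lemma right_of_left_minimal f (QL QR QL1 QR2 : finType) (B : bimachine S QL QR)
  (B1 : bimachine S QL1 QR) (B2 : bimachine S QL1 QR2) :
  realizes B f -> IsLeftOf f B B1 -> IsRightOf f B1 B2 ->
  [/\ realizes B2 f, minimal f B2 & bm_le B B2].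
Proof.
move=> rB isLeft isRight; have rB1 := left_realizes isLeft rB.
have eR : bR B1 = bR B by case: isLeft.
have le_L1 : lauto_le (bL B) (bL B1) by apply: (left_lauto_max isLeft rB); rewrite eR.
have le_L : lauto_le (bL B) (bL B2) by move=> u v /le_L1 /(right_lequiv isRight).
have le_R : rauto_le (bR B) (bR B2).
  by rewrite -eR; apply: (right_rauto_max isRight rB1) => u v /(right_lequiv isRight).
split; [exact: right_realizes isRight rB1 | apply: minimal_of_max | by []].
  move=> QL' QR' B' rB' le_R2 u v /(left_lauto_max isLeft rB') Luv.
  by apply/(right_lequiv isRight)/Luv; rewrite eR => x y /le_R /le_R2.
by move=> QL' QR' B' rB'; apply: right_rauto_max isRight rB'.
Qed.

End LeftRightMaximality.

Theorem proposition3p5 (S : finType) (f : transduction S) (QL QR : finType)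
  (B : bimachine S QL QR) :
  realizes B f ->
  (* Left_f(Right_f(B)) *)
  ((exists (QR1 QL2 : finType) (B1 : bimachine S QL QR1) (B2 : bimachine S QL2 QR1),
       IsRightOf f B B1 /\ IsLeftOf f B1 B2) /\
   (forall (QR1 QL2 : finType) (B1 : bimachine S QL QR1) (B2 : bimachine S QL2 QR1),
       IsRightOf f B B1 -> IsLeftOf f B1 B2 ->
       [/\ realizes B2 f, minimal f B2 & bm_le B B2])) /\
  (* Right_f(Left_f(B)) *)
  ((exists (QL1 QR2 : finType) (B1 : bimachine S QL1 QR) (B2 : bimachine S QL1 QR2),
       IsLeftOf f B B1 /\ IsRightOf f B1 B2) /\
   (forall (QL1 QR2 : finType) (B1 : bimachine S QL1 QR) (B2 : bimachine S QL1 QR2),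
       IsLeftOf f B B1 -> IsRightOf f B1 B2 ->
       [/\ realizes B2 f, minimal f B2 & bm_le B B2])).
Proof.
move=> rB; split; split.
- have [QR1 [B1 isRight]] := right_exists rB.
  have [QL2 [B2 isLeft]] := left_exists (right_realizes isRight rB).
  by exists QR1, QL2, B1, B2.
- by move=> QR1 QL2 B1 B2; apply: left_of_right_minimal.
- have [QL1 [B1 isLeft]] := left_exists rB.
  have [QR2 [B2 isRight]] := right_exists (left_realizes isLeft rB).
  by exists QL1, QR2, B1, B2.
by move=> QL1 QR2 B1 B2; apply: right_of_left_minimal.
Qed.
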